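(* Let $n\ge3$. A set $A$ of vertices of $C_n$ is maximally even if and only if $A$ is a maximizer of the function $F(A)=\prod_{\{u,v\}\subseteq A,\,u\neq v} d(u,v)$ (product over unordered pairs of distinct vertices of $A$), i.e. $F(A)=\max\{F(B): B\subseteq V(C_n),\ |B|=|A|\}$.
   Context: The cycle $C_n$ has vertex set $\{0,\dots,n-1\}$ with $i$ adjacent to $i+1\bmod n$; $d(u,v)$ is geodesic distance and $d^*(u,v)$ is the least non-negative integer congruent to $v-u$ mod $n$. For $A=\{a_0<\dots<a_{m-1}\}$, $\mathrm{span}_A(a_i,a_j)$ is the least positive integer congruent to $j-i$ mod $m$, and $\sigma^*_k(A)=[\,d^*(u,v): u,v\in A,u\ne v,\mathrm{span}_A(u,v)=k\,]$ (multiset). $A$ is maximally even if for each $1\le k\le m-1$ the set of values of $\sigma^*_k(A)$ is a single integer or two consecutive integers. *)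

From mathcomp Require Import all_boot all_order.
Set Implicit Arguments. Unset Strict Implicit. Unset Printing Implicit Defensive.

Section Cycle.
Variable n : nat.

Definition dstar (u v : 'I_n) : nat := (v + n - u) %% n.

Definition cdist (u v : 'I_n) : nat := minn (dstar u v) (dstar v u).

Definition sorted_elems (A : {set 'I_n}) : seq 'I_n :=
  sort (fun x y : 'I_n => (x <= y)%N) (enum A).

Definition idx (A : {set 'I_n}) (u : 'I_n) : nat := index u (sorted_elems A).

Definition span (A : {set 'I_n}) (u v : 'I_n) : nat :=
  let m := #|A| in
  let r := (idx A v + m - idx A u) %% m in
  if r == 0 then m else r.

(* the set of values of the multiset sigma*_k(A) *)
Definition sigma_vals (A : {set 'I_n}) (k : nat) : pred nat :=
  fun x => [exists u in A, exists v in A,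
             [&& u != v, span A u v == k & dstar u v == x]].

Definition maximally_even (A : {set 'I_n}) : Prop :=
  forall k, (1 <= k <= #|A| - 1)%N ->
    (exists c, (forall x, sigma_vals A k x -> x = c))
    \/ (exists c, (exists u, sigma_vals A k u /\ u = c) /\
                  (exists w, sigma_vals A k w /\ w = c.+1) /\
                  (forall x, sigma_vals A k x -> x = c \/ x = c.+1)).

Definition Fprod (A : {set 'I_n}) : nat :=
  \prod_(u in A) \prod_(v in A | (u < v)%N) cdist u v.

End Cycle.

From mathcomp Require Import all_boot all_order zify.
Set Implicit Arguments. Unset Strict Implicit. Unset Printing Implicit Defensive.

(* Let a_0 < ... < a_(m-1) enumerate B and put g_k(i) = d*(a_i, a_(i+k)), indices
   mod m, so that g_k lists sigma*_k(B) and d(a_i, a_(i+k)) = w(g_k(i)) with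
   w(x) = min(x, n - x).  Counting every pair twice, F(B)^2 = prod_(0<k<m) prod_i
   w(g_k(i)), and sum_i g_k(i) = k n whatever B is.  Since w is concave on
   [1, n-1], moving two entries of a sequence closer together (keeping the sum)
   strictly increases prod w, so prod_i w(g_k(i)) is bounded by its value on
   sequences whose entries differ by at most one, with equality exactly for
   those.  That every g_k is such a balanced sequence is maximal evenness, and the
   sets {floor(i n / m)} are maximally even for every m <= n; hence F(A) is
   maximal among m-sets exactly when A is maximally even. *)

Definition wrapdist n x := minn x (n - x).

Definition balanced m (x : nat -> nat) :=
  [forall i : 'I_m, forall j : 'I_m, x i <= (x j).+1].

Definition balanced_prod n m S :=
  wrapdist n (S %/ m) ^ (m - S %% m) * wrapdist n (S %/ m).+1 ^ (S %% m).

Lemma balanced_min m x : 0 < m -> balanced m x ->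
  exists j : 'I_m, forall i : 'I_m, x i = x j \/ x i = (x j).+1.
Proof.
move=> m_gt0 /forallP x_bal.
have [j _ j_min] := @arg_minnP _ (Ordinal m_gt0) xpredT (fun i : 'I_m => x i) isT.
by exists j => i; have := j_min i isT; have := forallP (x_bal i) j; lia.
Qed.

Lemma prod_balanced n m x : 0 < m -> balanced m x ->
  \prod_(i < m) wrapdist n (x i) = balanced_prod n m (\sum_(i < m) x i).
Proof.
move=> m_gt0 x_bal; have [j xE] := balanced_min m_gt0 x_bal.
set c := x j; set up := [set i : 'I_m | x i != c].
have sumE : \sum_(i < m) x i = c * m + #|up|.
  rewrite (eq_bigr (fun i => c + (i \in up))); last first.
    move=> i _; rewrite inE; case: (xE i) => ->; rewrite ?eqxx ?addn0 //.
    by rewrite neq_ltn ltnSn orbT addn1.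
  rewrite big_split sum_nat_const card_ord mulnC -sum1_card [in RHS]big_mkcond.
  by congr (_ + _); apply: eq_bigr => i _; case: (i \in up).
have up_lt : #|up| < m.
  have := cardsC up; rewrite card_ord.
  have : 0 < #|~: up| by apply/card_gt0P; exists j; rewrite !inE negbK.
  lia.
rewrite /balanced_prod sumE divnMDl // divn_small // addn0 modnMDl modn_small //.
rewrite (bigID (mem up)) /= mulnC.
rewrite (eq_bigr (fun=> wrapdist n c)); last by move=> i; rewrite inE negbK => /eqP ->.
rewrite [X in _ * X](eq_bigr (fun=> wrapdist n c.+1)) => [|i]; last first.
  by rewrite inE; case: (xE i) => ->; rewrite ?eqxx.
rewrite !prod_nat_const; congr (_ ^ _ * _ ^ _).
by rewrite -[m in m - _]card_ord -(cardsC up) addKn; apply: eq_card => i; rewrite inE.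
Qed.

Lemma wrapdist_gt0 n x : 0 < x < n -> 0 < wrapdist n x.
Proof. by rewrite /wrapdist; lia. Qed.

Lemma wrapdist_smooth n a b : 0 < a -> a.+1 < b -> b < n ->
  wrapdist n a * wrapdist n b < wrapdist n a.+1 * wrapdist n b.-1.
Proof.
case: b => // b a_gt0 ab bn; rewrite /wrapdist /minn.
by repeat case: ifP => ?; nia.
Qed.

Lemma bigD2_agree R (idx : R) (op : Monoid.com_law idx) m (i j : 'I_m)
    (F G : 'I_m -> R) : i != j -> (forall l, l != i -> l != j -> F l = G l) ->
  let r := \big[op/idx]_(l < m | (l != i) && (l != j)) F l in
  \big[op/idx]_(l < m) F l = op (F i) (op (F j) r) /\
  \big[op/idx]_(l < m) G l = op (G i) (op (G j) r).
Proof.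
move=> ij FG r.
have bigD2 H : \big[op/idx]_(l < m) H l =
    op (H i) (op (H j) (\big[op/idx]_(l < m | (l != i) && (l != j)) H l)).
  rewrite (bigD1 i) // (bigD1 j) 1?eq_sym //=.
rewrite !bigD2; split => //; congr (op _ (op _ _)).
by apply: eq_bigr => l /andP[li lj]; rewrite FG.
Qed.

Lemma smoothing_step n m (y : nat -> nat) :
  (forall i : 'I_m, 0 < y i < n) -> ~~ balanced m y ->
  exists y' : nat -> nat, [/\ forall i : 'I_m, 0 < y' i < n,
    \sum_(i < m) y' i = \sum_(i < m) y i,
    \sum_(i < m) y' i ^ 2 < \sum_(i < m) y i ^ 2 &
    \prod_(i < m) wrapdist n (y i) < \prod_(i < m) wrapdist n (y' i)].
Proof.
move=> y_bnd /forallPn[i /forallPn[j]]; rewrite -ltnNge => yji.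
have ij : i != j by apply: contraTneq yji => ->; rewrite ltnNge leqW.
pose y' (l : nat) := if l == i then (y i).-1 else if l == j then (y j).+1 else y l.
have y'i : y' i = (y i).-1 by rewrite /y' eqxx.
have y'j : y' j = (y j).+1 by rewrite /y' eq_sym (negbTE (ij : val i != j)) eqxx.
have y'E (l : 'I_m) : l != i -> l != j -> y l = y' l.
  by rewrite /y' => li lj; rewrite (negbTE (li : val l != i)) (negbTE (lj : val l != j)).
have := y_bnd i; have := y_bnd j => yj_bnd yi_bnd.
exists y'; split.
- move=> l; rewrite /y'; case: ifP => _; first lia.
  by case: ifP => _; [lia | exact: y_bnd].
- have [-> ->] := bigD2_agree addn ij y'E.
  by rewrite /= y'i y'j; lia.
- have [-> ->] := bigD2_agree addn ij
    (fun l li lj => congr1 (expn^~ 2) (y'E l li lj)).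
  rewrite /= y'i y'j; move: (y i) (y j) yji yi_bnd => a b ba a_gt0.
  set r := \sum_(l < m | _) _; rewrite -!mulnn; nia.
have [-> ->] := bigD2_agree muln ij (fun l li lj => congr1 (wrapdist n) (y'E l li lj)).
set r := \prod_(l < m | _) _.
have r_gt0 : 0 < r by apply: prodn_gt0 => l; exact/wrapdist_gt0/y_bnd.
rewrite /= y'i y'j !mulnA ltn_pmul2r // mulnC [X in _ < X]mulnC.
apply: wrapdist_smooth; lia.
Qed.

Lemma prod_wrapdist_le n m (y : nat -> nat) : 0 < m ->
  (forall i : 'I_m, 0 < y i < n) ->
  let P := \prod_(i < m) wrapdist n (y i) in
  P <= balanced_prod n m (\sum_(i < m) y i) /\
  (~~ balanced m y -> P < balanced_prod n m (\sum_(i < m) y i)).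
Proof.
(* Induction on the potential sum_i y_i^2, which every smoothing step decreases. *)
move=> m_gt0; have [N] := ubnP (\sum_(i < m) y i ^ 2).
elim: N y => // N IHN y y_pot y_bnd.
have [y_bal | y_unbal] := boolP (balanced m y).
  by rewrite -prod_balanced.
have [y' [y'_bnd sumE potE prod_lt]] := smoothing_step y_bnd y_unbal.
have [+ _] := IHN y' (leq_trans potE y_pot) y'_bnd; rewrite sumE => le_y'.
have lt_bal := leq_trans prod_lt le_y'.
by split=> [|_]; first exact: ltnW.
Qed.

Lemma modn_sub_eq_shift m i j k : i < m -> j < m -> 0 < k < m ->
  ((j + m - i) %% m == k) = (j == (i + k) %% m).
Proof.
move=> im jm km; case: (leqP i j) => ij; case: (leqP m (i + k)) => ikm.
- rewrite -[i + k](subnK ikm) -addnBAC // !modnDr !modn_small; lia.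
- by rewrite -addnBAC // modnDr !modn_small; lia.
- rewrite -[i + k](subnK ikm) modnDr !modn_small; lia.
- rewrite !modn_small; lia.
Qed.

Lemma modn_addl_eq_id m i k : i < m -> k < m -> ((k + i) %% m == i) = (k == 0).
Proof.
move=> im km; case: (ltnP (k + i) m) => ikm.
  by rewrite modn_small //; apply/eqP/eqP; lia.
by rewrite -[k + i](subnK ikm) modnDr modn_small; apply/eqP/eqP; lia.
Qed.

Section Rotation.
Variables (R : Type) (idx : R) (op : Monoid.com_law idx) (m : nat) (F : nat -> R).

Lemma big_ord_rot k : 0 < m ->
  \big[op/idx]_(i < m) F ((i + k) %% m) = \big[op/idx]_(i < m) F i.
Proof.
move=> m_gt0.
rewrite [RHS](reindex_inj (h := fun i : 'I_m => Ordinal (ltn_pmod (i + k) m_gt0))) //.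
move=> i1 i2 /(congr1 val) /= /eqP; rewrite eqn_modDr !modn_small // => /eqP.
exact: val_inj.
Qed.

Lemma big_ord_neq_rot (i : 'I_m) :
  \big[op/idx]_(j < m | j != i) F j = \big[op/idx]_(k < m | 0 < k) F ((i + k) %% m).
Proof.
have m_gt0 : 0 < m by apply: leq_ltn_trans (ltn_ord i).
rewrite (reindex_inj (h := fun k : 'I_m => Ordinal (ltn_pmod (i + k) m_gt0))) /=.
  by apply: eq_bigl => k; rewrite -(inj_eq val_inj) /= addnC modn_addl_eq_id // lt0n.
move=> k1 k2 /(congr1 val) /= /eqP; rewrite eqn_modDl !modn_small // => /eqP.
exact: val_inj.
Qed.

End Rotation.

Lemma prod_lt_pairs_sqr m (c : nat -> nat -> nat) : (forall i j, c i j = c j i) ->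
  (\prod_(i < m) \prod_(j < m | i < j) c i j) ^ 2 =
  \prod_(i < m) \prod_(j < m | j != i) c i j.
Proof.
move=> cC; rewrite -mulnn [X in _ * X](exchange_big_dep xpredT) //=.
rewrite -big_split /=; apply: eq_bigr => i _.
rewrite [RHS](bigID (fun j : 'I_m => i < j)) /=; congr (_ * _).
  by apply: eq_bigl => j; rewrite neq_ltn; case: ltngtP.
by apply: eq_big => [j|j _]; [rewrite neq_ltn; case: ltngtP | exact: cC].
Qed.

Lemma sum_wrap m k : k <= m -> \sum_(i < m) (m <= i + k) = k.
Proof.
move=> km; rewrite -(big_mkord xpredT (fun i => (m <= i + k : nat))).
rewrite (big_cat_nat (n := m - k)) ?leq_subr //=.
rewrite big1_seq => [|i]; last by rewrite mem_index_iota; lia.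
rewrite (eq_big_nat _ _ (F2 := fun=> 1)) => [|i]; last by lia.
by rewrite sum_nat_const_nat; lia.
Qed.

Lemma ltn_prod (I : finType) (P : pred I) (E1 E2 : I -> nat) j : P j ->
  (forall i, P i -> 0 < E1 i <= E2 i) -> E1 j < E2 j ->
  \prod_(i | P i) E1 i < \prod_(i | P i) E2 i.
Proof.
move=> Pj E12 E12j; rewrite !(bigD1 j Pj) /=.
have le_rest : \prod_(i | P i && (i != j)) E1 i <= \prod_(i | P i && (i != j)) E2 i.
  by apply: leq_prod => i /andP[/E12 /andP[_ ->]].
have rest_gt0 : 0 < \prod_(i | P i && (i != j)) E1 i.
  by rewrite big_mkcond prodn_gt0 // => i; case: ifP => // /andP[/E12 /andP[->]].
by apply: leq_trans (leq_mul E12j le_rest); rewrite ltn_pmul2r.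
Qed.

Section CycleSets.
(* [x0] only serves as the default value of [nth]: every index used is below [#|B|]. *)
Variables (n : nat) (x0 : 'I_n).

Lemma dstarE (u v : 'I_n) : dstar u v = if u <= v then v - u else v + n - u.
Proof.
have := ltn_ord u; have := ltn_ord v; rewrite /dstar; case: ifP => uv vn un.
  by rewrite -addnBAC // modnDr modn_small //; lia.
by rewrite modn_small //; lia.
Qed.

Lemma dstar_bounds (u v : 'I_n) : u != v -> 0 < dstar u v < n.
Proof.
rewrite -(inj_eq val_inj) dstarE; have := ltn_ord u; have := ltn_ord v.
by case: ifP => /=; lia.
Qed.

Lemma cdistE (u v : 'I_n) : cdist u v = wrapdist n (dstar u v).
Proof.
rewrite /cdist /wrapdist !dstarE; have := ltn_ord u; have := ltn_ord v.
by case: ifP; case: ifP; lia.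
Qed.

Lemma cdistC (u v : 'I_n) : cdist u v = cdist v u.
Proof. by rewrite /cdist minnC. Qed.

Section Elements.
Variable B : {set 'I_n}.
Local Notation s := (sorted_elems B).
Local Notation m := #|B|.

Definition elem_at i := nth x0 s i.

Lemma size_sorted_elems : size s = m.
Proof. by rewrite /sorted_elems size_sort cardE. Qed.

Lemma mem_sorted_elems u : (u \in s) = (u \in B).
Proof. by rewrite /sorted_elems mem_sort mem_enum. Qed.

Lemma sorted_elems_ltn : sorted ltn (map val s).
Proof.
rewrite ltn_sorted_uniq_leq (map_inj_uniq val_inj) sort_uniq enum_uniq /=.
by rewrite sorted_map; apply: sort_sorted => x y; exact: leq_total.
Qed.

Lemma elem_at_ltE i j : i < m -> j < m -> (elem_at i < elem_at j) = (i < j).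
Proof.
have mono k l : k < l < m -> elem_at k < elem_at l.
  case/andP=> kl lm; rewrite /elem_at -!(nth_map x0 0 val) ?size_sorted_elems //; last lia.
  by apply: (sorted_ltn_nth ltn_trans 0 sorted_elems_ltn);
    rewrite ?unfold_in /= ?size_map ?size_sorted_elems //; lia.
move=> im jm; case: (ltngtP i j) => [ij|ji|->]; last exact: ltnn.
  by rewrite mono ?ij.
by apply/negbTE; rewrite -leqNgt ltnW ?mono ?ji.
Qed.

Lemma elem_at_inj i j : i < m -> j < m -> elem_at i = elem_at j -> i = j.
Proof.
move=> im jm eij; case: (ltngtP i j) => // [ij | ji].
  by have := elem_at_ltE im jm; rewrite eij ltnn ij.
by have := elem_at_ltE jm im; rewrite eij ltnn ji.
Qed.

Lemma elem_at_mem i : i < m -> elem_at i \in B.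
Proof. by move=> im; rewrite -mem_sorted_elems mem_nth ?size_sorted_elems. Qed.

Lemma idx_elem_at i : i < m -> idx B (elem_at i) = i.
Proof.
move=> im; rewrite /idx index_uniq ?size_sorted_elems //.
by rewrite sort_uniq enum_uniq.
Qed.

Lemma elem_at_idx u : u \in B -> elem_at (idx B u) = u /\ idx B u < m.
Proof.
move=> uB; rewrite /elem_at /idx nth_index ?mem_sorted_elems //.
by rewrite -size_sorted_elems index_mem mem_sorted_elems.
Qed.

Lemma big_set_elems_cond R (idx0 : R) (op : Monoid.com_law idx0) (P : pred 'I_n) G :
  \big[op/idx0]_(u in B | P u) G u =
  \big[op/idx0]_(i < m | P (elem_at i)) G (elem_at i).
Proof.
have s_perm : perm_eq s (enum B) by rewrite perm_sort.
rewrite -big_enum_cond -(perm_big _ s_perm) (big_nth x0) big_mkord.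
by rewrite -/s size_sorted_elems.
Qed.

Lemma big_set_elems R (idx0 : R) (op : Monoid.com_law idx0) G :
  \big[op/idx0]_(u in B) G u = \big[op/idx0]_(i < m) G (elem_at i).
Proof.
by rewrite -(big_set_elems_cond op xpredT); apply: eq_bigl => u; rewrite andbT.
Qed.

(* [gap k] is the sequence g_k of the header; its values form sigma*_k(B). *)
Definition gap k i := dstar (elem_at i) (elem_at ((i + k) %% m)).

Lemma elem_at_rot_neq k i : 0 < k < m -> i < m ->
  elem_at i != elem_at ((i + k) %% m).
Proof.
move=> km im; have m_gt0 : 0 < m by lia.
apply/eqP => /(elem_at_inj im (ltn_pmod _ m_gt0)) /eqP.
by rewrite eq_sym addnC modn_addl_eq_id //; [case: eqP; lia | lia].
Qed.

Lemma gap_bounds k i : 0 < k < m -> i < m -> 0 < gap k i < n.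
Proof. by move=> km im; apply/dstar_bounds/elem_at_rot_neq. Qed.

Lemma gap_add k i : 0 < k < m -> i < m ->
  gap k i + elem_at i = elem_at ((i + k) %% m) + n * (m <= i + k).
Proof.
move=> km im; rewrite /gap dstarE; have [ikm | ikm] := ltnP (i + k) m.
  have lt_ik : elem_at i < elem_at (i + k) by rewrite elem_at_ltE //; lia.
  by rewrite modn_small // (ltnW lt_ik) muln0; lia.
have -> : (i + k) %% m = i + k - m.
  by rewrite -[in LHS](subnK ikm) modnDr modn_small; lia.
have lt_ki : elem_at (i + k - m) < elem_at i by rewrite elem_at_ltE; lia.
by rewrite muln1 leqNgt lt_ki /=; have := ltn_ord (elem_at i); lia.
Qed.

Lemma gap_sum k : 0 < k < m -> \sum_(i < m) gap k i = k * n.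
Proof.
move=> km; have m_gt0 : 0 < m by lia.
have : \sum_(i < m) (gap k i + elem_at i) =
       \sum_(i < m) (elem_at ((i + k) %% m) + n * (m <= i + k)).
  by apply: eq_bigr => i _; exact: gap_add.
rewrite !big_split /= (big_ord_rot _ (fun j => val (elem_at j))) // -big_distrr /=.
rewrite sum_wrap; last by case/andP: km => _ /ltnW.
by rewrite [X in X = _]addnC mulnC => /addnI.
Qed.
End Elements.

Lemma Fprod_elems (B : {set 'I_n}) : Fprod B =
  \prod_(i < #|B|) \prod_(j < #|B| | i < j) cdist (elem_at B i) (elem_at B j).
Proof.
rewrite /Fprod big_set_elems; apply: eq_bigr => i _.
by rewrite big_set_elems_cond; apply: eq_bigl => j; rewrite elem_at_ltE.
Qed.

Lemma Fprod_sqr (B : {set 'I_n}) : Fprod B ^ 2 =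
  \prod_(k < #|B| | 0 < k) \prod_(i < #|B|) wrapdist n (gap B k i).
Proof.
rewrite Fprod_elems (@prod_lt_pairs_sqr _ (fun i j => cdist (elem_at B i) (elem_at B j))).
  rewrite (eq_bigr _ (fun (i : 'I_#|B|) _ =>
    big_ord_neq_rot muln (fun j => cdist (elem_at B i) (elem_at B j)) i)).
  rewrite exchange_big /=.
  by apply: eq_bigr => k _; apply: eq_bigr => i _; rewrite cdistE.
by move=> i j; exact: cdistC.
Qed.

End CycleSets.

Section Spectrum.
Variables (n : nat) (x0 : 'I_n) (B : {set 'I_n}).
Local Notation m := #|B|.
Local Notation a := (elem_at x0 B).
Local Notation gap := (gap x0 B).

Lemma sigma_valsP k v : 0 < k < m ->
  reflect (exists i : 'I_m, gap k i = v) (sigma_vals B k v).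
Proof.
move=> km; apply: (iffP existsP) => [[u /andP[uB /existsP[w /andP[wB]]]] | [i <-]].
  case/and3P=> uw; have [au um] := elem_at_idx x0 uB.
  have [aw wm] := elem_at_idx x0 wB.
  rewrite /span; case: ifP => [_ /eqP|_]; first lia.
  rewrite modn_sub_eq_shift // => /eqP spanE /eqP <-.
  by exists (Ordinal um); rewrite /gap -spanE aw au.
have im := ltn_ord i; have jm : (i + k) %% m < m by rewrite ltn_pmod //; lia.
exists (a i); rewrite elem_at_mem //=; apply/existsP; exists (a ((i + k) %% m)).
rewrite elem_at_mem //= eqxx andbT elem_at_rot_neq //=.
rewrite /span !idx_elem_at //.
have -> : ((i + k) %% m + m - i) %% m = k by apply/eqP; rewrite modn_sub_eq_shift.
by have /negbTE-> : k != 0 by lia.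
Qed.

Lemma maximally_evenP :
  maximally_even B <-> forall k, 0 < k < m -> balanced m (gap k).
Proof.
split=> [ME k km | bal k km].
  have gap_val (i : 'I_m) : sigma_vals B k (gap k i) by apply/sigma_valsP => //; exists i.
  apply/forallP => i; apply/forallP => j.
  have [[c vals_c] | [c [_ [_ vals_c]]]] := ME k ltac:(lia).
    by rewrite (vals_c _ (gap_val i)) (vals_c _ (gap_val j)).
  by move: (vals_c _ (gap_val i)) (vals_c _ (gap_val j)); lia.
have {km} km : 0 < k < m by lia.
have m_gt0 : 0 < m by case/andP: km; apply: ltn_trans.
have [j gapE] := balanced_min m_gt0 (bal k km).
have [/existsP[i /eqP gap_i] | none] := boolP [exists i : 'I_m, gap k i == (gap k j).+1].
  right; exists (gap k j); split; [|split].
  - by exists (gap k j); split => //; apply/sigma_valsP => //; exists j.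
  - by exists (gap k j).+1; split => //; apply/sigma_valsP => //; exists i.
  by move=> x /(sigma_valsP _ km) [l <-]; exact: gapE.
left; exists (gap k j) => x /(sigma_valsP _ km) [i <-].
by case: (gapE i) => // gap_i; move/existsPn: none => /(_ i); rewrite gap_i eqxx.
Qed.

End Spectrum.

Lemma sorted_elems_seq n (t : seq nat) : sorted ltn t -> all (gtn n) t ->
  map val (sorted_elems [set x : 'I_n | val x \in t]) = t.
Proof.
move=> t_sorted t_lt; apply: (sorted_eq leq_trans anti_leq).
- by rewrite sorted_map; apply: sort_sorted => x y; exact: leq_total.
- by apply: sub_sorted t_sorted => x y /ltnW.
apply: uniq_perm.
- by rewrite (map_inj_uniq val_inj) sort_uniq enum_uniq.
- exact: sorted_uniq ltn_trans ltnn _ t_sorted.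
move=> y; apply/mapP/idP => [[x] | yt].
  by rewrite mem_sort mem_enum inE => ? ->.
have yn : y < n by move/allP: t_lt => /(_ y yt).
by exists (Ordinal yn); rewrite // mem_sort mem_enum inE.
Qed.

Section FloorSet.
Variables (n m : nat) (x0 : 'I_n).
Hypothesis m_le : m <= n.

Definition floor_set : {set 'I_n} :=
  [set x : 'I_n | val x \in [seq i * n %/ m | i <- iota 0 m]].

Lemma floor_sorted : sorted ltn [seq i * n %/ m | i <- iota 0 m].
Proof.
have [-> // | m_gt0] := posnP m.
apply: (homo_sorted (e := ltn)) (iota_ltn_sorted 0 m) => i j ij.
have : i * n %/ m + 1 <= j * n %/ m.
  have -> : i * n %/ m + 1 = (1 * m + i * n) %/ m by rewrite divnMDl // addnC.
  by apply: leq_div2r; nia.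
by rewrite addn1.
Qed.

Lemma floor_sorted_elems :
  map val (sorted_elems floor_set) = [seq i * n %/ m | i <- iota 0 m].
Proof.
apply: sorted_elems_seq floor_sorted _; apply/allP => y /mapP[i].
rewrite mem_iota add0n => /andP[_ im] ->.
by rewrite /= ltn_divLR; [nia | lia].
Qed.

Lemma card_floor_set : #|floor_set| = m.
Proof.
rewrite -(size_sorted_elems floor_set) -(size_map val) floor_sorted_elems.
by rewrite size_map size_iota.
Qed.

Lemma floor_set_elem_at i : i < m -> val (elem_at x0 floor_set i) = i * n %/ m.
Proof.
move=> im; rewrite /elem_at -(nth_map x0 0 val) ?size_sorted_elems ?card_floor_set //.
by rewrite floor_sorted_elems (nth_map 0) ?size_iota // nth_iota.
Qed.

Lemma floor_set_gap k i : 0 < k < m -> i < m ->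
  gap x0 floor_set k i = k * n %/ m + (m <= (i * n) %% m + (k * n) %% m).
Proof.
move=> km im; have m_gt0 : 0 < m by lia.
rewrite -card_floor_set in km im.
have := gap_add x0 km im; rewrite card_floor_set in km im *.
rewrite !floor_set_elem_at ?ltn_pmod //.
have -> : (i + k) %% m * n %/ m + n * (m <= i + k) = (i + k) * n %/ m.
  case: (ltnP (i + k) m) => ikm; first by rewrite modn_small // muln0 addn0.
  rewrite -[in RHS](subnK ikm) -[in LHS](subnK ikm) modnDr modn_small; last lia.
  by rewrite muln1 mulnDl [m * n]mulnC [in RHS]addnC divnMDl // addnC.
by rewrite mulnDl divnD //; lia.
Qed.

Lemma floor_set_balanced k : 0 < k < m -> balanced m (gap x0 floor_set k).
Proof.
move=> km; apply/forallP => i; apply/forallP => j.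
by rewrite !floor_set_gap //; case: (m <= _); case: (m <= _); lia.
Qed.

End FloorSet.

Section Optimum.
Variables (n : nat) (x0 : 'I_n).

Definition Fbound m := \prod_(k < m | 0 < k) balanced_prod n m (k * n).

Lemma gap_prod_le (B : {set 'I_n}) k : 0 < k < #|B| ->
  let P := \prod_(i < #|B|) wrapdist n (gap x0 B k i) in
  0 < P <= balanced_prod n #|B| (k * n) /\
  (~~ balanced #|B| (gap x0 B k) -> P < balanced_prod n #|B| (k * n)).
Proof.
move=> km P; have gap_bnd (i : 'I_#|B|) := gap_bounds x0 km (ltn_ord i).
have m_gt0 : 0 < #|B| by case/andP: km; apply: ltn_trans.
have [le_bal lt_bal] := prod_wrapdist_le m_gt0 gap_bnd.
rewrite gap_sum // in le_bal lt_bal; split => //.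
by rewrite le_bal andbT prodn_gt0 // => i; exact/wrapdist_gt0/gap_bnd.
Qed.

Lemma Fprod_sqr_le (B : {set 'I_n}) : Fprod B ^ 2 <= Fbound #|B|.
Proof.
rewrite (Fprod_sqr x0); apply: leq_prod => k k_gt0.
have km : 0 < k < #|B| by rewrite k_gt0 ltn_ord.
by have [/andP[_ ->]] := gap_prod_le km.
Qed.

Lemma Fprod_sqr_boundP (B : {set 'I_n}) : Fprod B ^ 2 = Fbound #|B| <->
  forall k, 0 < k < #|B| -> balanced #|B| (gap x0 B k).
Proof.
split=> [F_eq k km | bal].
  apply/negPn/negP => unbal.
  suff : Fprod B ^ 2 < Fbound #|B| by rewrite F_eq ltnn.
  rewrite (Fprod_sqr x0); apply: (ltn_prod (j := Ordinal (proj2 (andP km)))) => /=.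
  - by case/andP: km.
  - move=> i i_gt0; have im : 0 < i < #|B| by rewrite i_gt0 ltn_ord.
    by have [] := gap_prod_le im.
  by have [_] := gap_prod_le km; apply.
rewrite (Fprod_sqr x0); apply: eq_bigr => k k_gt0.
have km : 0 < k < #|B| by rewrite k_gt0 ltn_ord.
by rewrite prod_balanced ?gap_sum ?bal //; apply: ltn_trans k_gt0 (ltn_ord k).
Qed.

Lemma max_Fprod_sqr m : m <= n ->
  (\max_(B : {set 'I_n} | #|B| == m) Fprod B) ^ 2 = Fbound m.
Proof.
move=> m_le; have floor_m : #|floor_set n m| == m by rewrite card_floor_set.
apply/eqP; rewrite eqn_leq; apply/andP; split.
  have ex_m : 0 < #|[pred B : {set 'I_n} | #|B| == m]|.
    by apply/card_gt0P; exists (floor_set n m).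
  have [B /eqP Bm maxE] := eq_bigmax_cond (@Fprod n) ex_m.
  have -> : \max_(B0 : {set 'I_n} | #|B0| == m) Fprod B0 = Fprod B by rewrite -maxE.
  by rewrite -Bm Fprod_sqr_le.
have floor_sqr : Fprod (floor_set n m) ^ 2 = Fbound m.
  rewrite -{2}(eqP floor_m); apply/Fprod_sqr_boundP => k; rewrite (eqP floor_m).
  exact: floor_set_balanced.
rewrite -floor_sqr leq_sqr.
exact: (leq_bigmax_cond (P := fun B : {set 'I_n} => #|B| == m)).
Qed.

End Optimum.

Unset Implicit Arguments.

Theorem mainTheorem6 (n : nat) (A : {set 'I_n}) :
  (3 <= n)%N ->
  (maximally_even A <->
   Fprod A = \max_(B : {set 'I_n} | #|B| == #|A|) Fprod B).
Proof.
move=> n_ge3; have x0 : 'I_n := Ordinal (leq_trans (isT : 0 < 3) n_ge3).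
have card_le : #|A| <= n by rewrite -[n in _ <= n]card_ord max_card.
apply: (iff_trans (maximally_evenP x0 A)).
apply: (iff_trans (iff_sym (Fprod_sqr_boundP x0 A))).
rewrite -(max_Fprod_sqr x0 card_le).
by split=> [/eqP | ->//]; rewrite eqn_exp2r // => /eqP.
Qed.
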